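(* Let $T$ be a triangle and $a\in[0,1]$. If $h(n,T)\le a n^3(1+o(1))$ as $n\to\infty$, then $h(n,T)\le a n^3$ for every positive integer $n$.
   Context: For a triangle $T$ with side lengths $a_1,a_2,a_3$ and $\varepsilon>0$, with $\varepsilon'=\varepsilon\min\{a_1,a_2,a_3\}$, a triangle $A'B'C'$ is $\varepsilon$-congruent to $T$ if there are $A,B,C\in\mathbb{R}^2$ with $ABC$ congruent to $T$ and $A',B',C'$ within distance $\varepsilon'$ of $A,B,C$ respectively. $h(n,T,\varepsilon)$ is the maximum over $n$-point sets $P\subseteq\mathbb{R}^2$ of the number of 3-subsets of $P$ forming triangles $\varepsilon$-congruent to $T$, and $h(n,T)=\min_{\varepsilon>0}h(n,T,\varepsilon)$. *)

From HB Require Import structures.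
From mathcomp Require Import all_boot all_order all_algebra.
From mathcomp Require Import boolp reals.
Set Implicit Arguments. Unset Strict Implicit. Unset Printing Implicit Defensive.
Import Order.TTheory GRing.Theory Num.Theory.
Local Open Scope ring_scope.

Section Defs.
Variable R : realType.

Definition point := (R * R)%type.

Definition dist (p q : point) : R :=
  Num.sqrt ((p.1 - q.1) ^+ 2 + (p.2 - q.2) ^+ 2).

(* T is given by its side lengths a1 a2 a3 (a nondegenerate triangle). *)
Definition is_triangle (a1 a2 a3 : R) : Prop :=
  0 < a1 /\ 0 < a2 /\ 0 < a3 /\ a1 < a2 + a3 /\ a2 < a1 + a3 /\ a3 < a1 + a2.

Definition congruentT (a1 a2 a3 : R) (A B C : point) : Prop :=
  dist B C = a1 /\ dist C A = a2 /\ dist A B = a3.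

Definition eps_congruent (a1 a2 a3 eps : R) (A' B' C' : point) : Prop :=
  let eps' := eps * Num.min a1 (Num.min a2 a3) in
  exists A B C : point, congruentT a1 a2 a3 A B C /\
    dist A' A <= eps' /\ dist B' B <= eps' /\ dist C' C <= eps'.

Definition good_triple (a1 a2 a3 eps : R) n (p : 'I_n -> point)
    (S : {set 'I_n}) : Prop :=
  exists i j k : 'I_n, S = [set i; j; k] /\
    eps_congruent a1 a2 a3 eps (p i) (p j) (p k).

Definition count_good (a1 a2 a3 eps : R) n (p : 'I_n -> point) : nat :=
  #|[set S : {set 'I_n} | (#|S| == 3)%N && `[< good_triple a1 a2 a3 eps p S >]]|.

Definition h_eps (a1 a2 a3 eps : R) (n : nat) : nat :=
  \max_(k < ('C(n, 3)).+1 |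
     `[< exists p : 'I_n -> point, injective p /\ count_good a1 a2 a3 eps p = k >]) k.

(* h(n,T) = min over eps > 0 of h(n,T,eps) (values lie in [0, C(n,3)]) *)
Definition h (a1 a2 a3 : R) (n : nat) : nat :=
  \big[minn/'C(n, 3)]_(k < ('C(n, 3)).+1 |
     `[< exists eps : R, 0 < eps /\ h_eps a1 a2 a3 eps n = k >]) k.

End Defs.

From HB Require Import structures.
From mathcomp Require Import all_boot all_order all_algebra.
From mathcomp Require Import boolp reals.
From mathcomp Require Import ring lra zify.
Import Order.TTheory GRing.Theory Num.Theory.
Set Implicit Arguments. Unset Strict Implicit. Unset Printing Implicit Defensive.
Local Open Scope ring_scope.

(* Replace each point of an n-point set by m points on a tiny horizontal
   segment through it.  An (eps/2)-congruent copy of T in the original set then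
   yields m^3 eps-congruent copies in the new nm-point set, one for each choice
   of a point in each of the three segments; hence h(n) m^3 <= h(nm).  Together
   with h(nm) <= a (nm)^3 (1 + o(1)) this gives h(n) <= a n^3 (1 + o(1)) as
   m -> oo, i.e. h(n) <= a n^3. *)

Lemma ler_mul1D_gt0 (R : realFieldType) (x y : R) :
  (forall e, 0 < e -> x <= y * (1 + e)) -> x <= y.
Proof.
move=> le_xy; have [y_le0 | y_gt0] := leP y 0.
  by apply: le_trans (le_xy 1 ltr01) _; nra.
apply/ler_addgt0Pr => e e_gt0.
have := le_xy (e / y) (divr_gt0 e_gt0 y_gt0).
by rewrite mulrDr mulr1 mulrCA divff ?mulr1 // gt_eqF.
Qed.

Lemma dist_shiftx_le (R : realType) (P A : point R) (s : R) : 0 <= s ->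
  dist (P.1 + s, P.2) A <= dist P A + s.
Proof.
move=> s_ge0; rewrite /dist /=.
set a := P.1 - A.1; set b := P.2 - A.2; set r := Num.sqrt (a ^+ 2 + b ^+ 2).
have -> : P.1 + s - A.1 = a + s by rewrite /a; lra.
have r_ge0 : 0 <= r := sqrtr_ge0 _.
have r2 : r ^+ 2 = a ^+ 2 + b ^+ 2 by rewrite sqr_sqrtr // addr_ge0 ?sqr_ge0.
have a_le_r : a <= r by have := sqr_ge0 b; nra.
have rs_ge0 : 0 <= r + s by lra.
rewrite -(ger0_norm rs_ge0) -sqrtr_sqr ler_sqrt ?sqr_ge0 //; nra.
Qed.

Section BlockIndex.
Variables (n m : nat) (m_gt0 : (0 < m)%N).

Lemma block_subproof (k : 'I_(n * m)) : (k %/ m < n)%N.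
Proof. by rewrite ltn_divLR. Qed.

Definition block (k : 'I_(n * m)) : 'I_n := Ordinal (block_subproof k).
Definition slot (k : 'I_(n * m)) : 'I_m := Ordinal (ltn_pmod k m_gt0).

Lemma in_block_subproof (x : 'I_n) (j : 'I_m) : (x * m + j < n * m)%N.
Proof. by have := ltn_ord x; have := ltn_ord j; nia. Qed.

Definition in_block (x : 'I_n) (j : 'I_m) : 'I_(n * m) :=
  Ordinal (in_block_subproof x j).

Lemma block_in_block x j : block (in_block x j) = x.
Proof. by apply: val_inj; rewrite /= divnMDl // divn_small ?addn0. Qed.

Lemma slot_in_block x j : slot (in_block x j) = j.
Proof. by apply: val_inj; rewrite /= modnMDl modn_small. Qed.

Lemma in_blockE k : in_block (block k) (slot k) = k.
Proof. by apply: val_inj; rewrite /= -divn_eq. Qed.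

(* The m^3 lifts of a set S: the tuple u picks a point in the block of each
   element of S, listed in the order of [enum S]. *)
Definition lift_triple (S : {set 'I_n}) (u : 3.-tuple 'I_m) : {set 'I_(n * m)} :=
  [set in_block x (nth (Ordinal m_gt0) u (index x (enum S))) | x in S].

Lemma block_lift_triple S u : block @: lift_triple S u = S.
Proof.
rewrite -imset_comp (eq_imset (g := id)) ?imset_id // => x /=.
exact: block_in_block.
Qed.

Lemma card_lift_triple S u : #|lift_triple S u| = #|S|.
Proof.
rewrite card_in_imset // => x y _ _ /(congr1 block).
by rewrite !block_in_block.
Qed.

Lemma lift_triple_inj (S : {set 'I_n}) (u u' : 3.-tuple 'I_m) : #|S| = 3%N ->
  lift_triple S u = lift_triple S u' -> u = u'.
Proof.
move=> S3 eq_lift; apply: eq_from_tnth => r; rewrite !(tnth_nth (Ordinal m_gt0)).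
have r_lt : (r < size (enum S))%N by rewrite -cardE S3.
have [x0 _] : {x0 : 'I_n | x0 \in S} by apply/sigW/set0Pn; rewrite -card_gt0 S3.
set x := nth x0 (enum S) r.
have xS : x \in S by rewrite -mem_enum mem_nth.
have /imsetP[y yS ex] : in_block x (nth (Ordinal m_gt0) u (index x (enum S)))
    \in lift_triple S u' by rewrite -eq_lift; apply: imset_f.
have exy : x = y by move/(congr1 block): ex; rewrite !block_in_block.
move: ex; rewrite -exy => /(congr1 slot); rewrite !slot_in_block.
by rewrite index_uniq ?enum_uniq.
Qed.

End BlockIndex.

Section Separation.
Variables (R : realType) (n : nat) (p : 'I_n -> point R).

Definition l1_sep : R := \big[Num.min/1]_(ij : 'I_n * 'I_n | ij.1 != ij.2)
  (`|(p ij.1).1 - (p ij.2).1| + `|(p ij.1).2 - (p ij.2).2|).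

Lemma l1_sep_le i j : i != j ->
  l1_sep <= `|(p i).1 - (p j).1| + `|(p i).2 - (p j).2|.
Proof. by move=> ij; apply: (bigmin_le_cond _ (j := (i, j))). Qed.

Lemma l1_sep_gt0 : injective p -> 0 < l1_sep.
Proof.
move=> p_inj; apply: lt_bigmin => // -[i j] /= ij.
have : p i != p j by apply: contra_neq ij => /p_inj.
case: (p i) (p j) => [x1 y1] [x2 y2]; rewrite xpair_eqE negb_and => neq.
rewrite lt_def addr_ge0 // andbT paddr_eq0 // !normr_eq0 !subr_eq0.
by rewrite negb_and.
Qed.

End Separation.

Section Blowup.
Variables (R : realType) (n m : nat) (m_gt0 : (0 < m)%N).
Variables (p : 'I_n -> point R) (t : R).
Hypothesis t_gt0 : 0 < t.

Definition blowup (k : 'I_(n * m)) : point R :=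
  ((p (block m_gt0 k)).1 + t * (slot m_gt0 k)%:R, (p (block m_gt0 k)).2).

Lemma blowup_inj : injective p -> t * m%:R <= l1_sep p -> injective blowup.
Proof.
move=> p_inj tm_le k k'; rewrite /blowup.
set x := block m_gt0 k; set x' := block m_gt0 k'.
set r := (slot m_gt0 k)%:R; set r' := (slot m_gt0 k')%:R; case=> e1 e2.
have [ex | nx] := eqVneq x x'.
  rewrite -[k]in_blockE -[k']in_blockE -/x -/x' ex; congr in_block.
  move: e1; rewrite ex => /addrI /(mulfI (lt0r_neq0 t_gt0)) /eqP.
  by rewrite eqr_nat => /eqP eq_slot; apply: val_inj.
have r_lt : r < m%:R by rewrite ltr_nat.
have r_lt' : r' < m%:R by rewrite ltr_nat.
have r_ge0 : 0 <= r by []; have r_ge0' : 0 <= r' by [].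
have := l1_sep_le p nx; rewrite e2 subrr normr0 addr0.
have -> : (p x).1 - (p x').1 = t * (r' - r) by rewrite mulrBr; lra.
rewrite normrM gtr0_norm // => sep_le.
have : `|r' - r| < m%:R by rewrite ltr_norml; apply/andP; split; lra.
by rewrite -(ltr_pM2l t_gt0) => lt_tm; exfalso; lra.
Qed.

Lemma blowup_dist_le k (A : point R) (d : R) :
  dist (p (block m_gt0 k)) A <= d -> dist (blowup k) A <= d + t * m%:R.
Proof.
move=> le_d; have s_ge0 : 0 <= t * (slot m_gt0 k)%:R by rewrite mulr_ge0 // ltW.
rewrite /blowup; apply: le_trans (dist_shiftx_le _ _ s_ge0) _; rewrite lerD //.
by rewrite ler_pM2l // ler_nat ltnW.
Qed.

Lemma good_triple_blowup (a1 a2 a3 eps' eps : R) S u :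
  eps' * Num.min a1 (Num.min a2 a3) + t * m%:R <= eps * Num.min a1 (Num.min a2 a3) ->
  good_triple a1 a2 a3 eps' p S ->
  good_triple a1 a2 a3 eps blowup (lift_triple m_gt0 S u).
Proof.
move=> eps_le [i [j [k [-> [A [B [C [cABC [dA [dB dC]]]]]]]]]].
pose f x := in_block m_gt0 x (nth (Ordinal m_gt0) u (index x (enum [set i; j; k]))).
exists (f i), (f j), (f k); split.
  by rewrite /lift_triple !(imsetU, imsetU1, imset_set1).
exists A, B, C; split => //.
by split; [|split]; apply: le_trans eps_le; apply: blowup_dist_le;
  rewrite block_in_block.
Qed.

Lemma count_good_blowup (a1 a2 a3 eps' eps : R) :
  eps' * Num.min a1 (Num.min a2 a3) + t * m%:R <= eps * Num.min a1 (Num.min a2 a3) ->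
  (count_good a1 a2 a3 eps' p * m ^ 3 <= count_good a1 a2 a3 eps blowup)%N.
Proof.
move=> eps_le; rewrite /count_good; set G' := [set S | _].
have -> : (#|G'| * m ^ 3 = #|setX G' [set: 3.-tuple 'I_m]|)%N.
  by rewrite cardsX cardsT card_tuple card_ord.
rewrite -(@card_in_imset _ _ (fun Su => lift_triple m_gt0 Su.1 Su.2)).
  apply/subset_leq_card/subsetP => _ /imsetP[[S u] /setXP[+ _] ->].
  rewrite !inE card_lift_triple => /andP[-> /asboolP good] /=.
  by apply/asboolP; exact: good_triple_blowup eps_le good.
move=> [S u] [S' u'] /setXP[+ _] _ /= eq_lift.
rewrite inE => /andP[/eqP S3 _].
have eS : S = S'.
  by rewrite -(block_lift_triple m_gt0 S u) eq_lift block_lift_triple.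
by move: eq_lift; rewrite -eS => /(lift_triple_inj S3) ->.
Qed.

End Blowup.

Section Extremal.
Variables (R : realType) (a1 a2 a3 : R).

Lemma count_good_le_binom eps n (p : 'I_n -> point R) :
  (count_good a1 a2 a3 eps p <= 'C(n, 3))%N.
Proof.
rewrite -[n in 'C(n, _)]card_ord -card_draws.
by apply/subset_leq_card/subsetP => S; rewrite !inE => /andP[].
Qed.

Lemma count_good_le_h_eps eps n (p : 'I_n -> point R) : injective p ->
  (count_good a1 a2 a3 eps p <= h_eps a1 a2 a3 eps n)%N.
Proof.
move=> p_inj; have lt_cnt := count_good_le_binom eps p; rewrite -ltnS in lt_cnt.
by apply: (leq_bigmax_cond (Ordinal lt_cnt)); apply/asboolP; exists p.
Qed.

Lemma h_eps_le_binom eps n : (h_eps a1 a2 a3 eps n <= 'C(n, 3))%N.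
Proof. by apply/bigmax_leqP => k _; rewrite -ltnS. Qed.

Lemma h_eps_attained eps n : exists2 p : 'I_n -> point R,
  injective p & count_good a1 a2 a3 eps p = h_eps a1 a2 a3 eps n.
Proof.
pose p0 (i : 'I_n) : point R := (i%:R, 0).
have p0_inj : injective p0 by move=> i j [] /eqP; rewrite eqr_nat => /eqP /val_inj.
have lt_cnt := count_good_le_binom eps p0; rewrite -ltnS in lt_cnt.
rewrite /h_eps (bigop.bigmax_eq_arg (Ordinal lt_cnt)); last by apply/asboolP; exists p0.
case: arg_maxnP => [|k /asboolP[p [p_inj cnt_p]] _]; last by exists p.
by apply/asboolP; exists p0.
Qed.

Lemma h_le_h_eps eps n : 0 < eps -> (h a1 a2 a3 n <= h_eps a1 a2 a3 eps n)%N.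
Proof.
move=> eps_gt0; have lt_h := h_eps_le_binom eps n; rewrite -ltnS in lt_h.
apply: (@bigmin_le_cond _ nat _ _ (Ordinal lt_h) _ (fun k => nat_of_ord k)).
by apply/asboolP; exists eps.
Qed.

Lemma leq_h c n : (forall eps, 0 < eps -> (c <= h_eps a1 a2 a3 eps n)%N) ->
  (c <= h a1 a2 a3 n)%N.
Proof.
move=> le_c; apply: (big_ind (fun x => c <= x)%N).
- exact: leq_trans (le_c 1 ltr01) (h_eps_le_binom _ _).
- by move=> x y cx cy; rewrite leq_min cx cy.
- by move=> k /asboolP[eps [eps_gt0 <-]]; apply: le_c.
Qed.

Lemma h_mul_cube_le n m : (0 < m)%N -> 0 < Num.min a1 (Num.min a2 a3) ->
  (h a1 a2 a3 n * m ^ 3 <= h a1 a2 a3 (n * m))%N.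
Proof.
move=> m_gt0 mn_gt0; apply: leq_h => eps eps_gt0.
set mn := Num.min a1 (Num.min a2 a3); have eps2_gt0 : 0 < eps / 2 by rewrite divr_gt0.
have [p p_inj cnt_p] := h_eps_attained (eps / 2) n.
(* Each segment is shorter than the l1-separation of [p], which keeps the new
   points distinct, and than eps/2 times the shortest side of T, which turns
   (eps/2)-congruence into eps-congruence. *)
pose t := Num.min (l1_sep p) (eps / 2 * mn) / m%:R.
have tm : t * m%:R = Num.min (l1_sep p) (eps / 2 * mn).
  by rewrite divfK // pnatr_eq0 -lt0n.
have t_gt0 : 0 < t.
  by rewrite divr_gt0 ?ltr0n // lt_min l1_sep_gt0 // mulr_gt0.
have tm_sep : t * m%:R <= l1_sep p by rewrite tm ge_min lexx.
have tm_eps : t * m%:R <= eps / 2 * mn by rewrite tm ge_min lexx orbT.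
have eps_le : eps / 2 * mn + t * m%:R <= eps * mn by lra.
apply: leq_trans (count_good_le_h_eps _ (blowup_inj t_gt0 p_inj tm_sep)).
apply: leq_trans (count_good_blowup m_gt0 p t_gt0 eps_le).
by rewrite leq_mul2r cnt_p h_le_h_eps ?orbT.
Qed.

End Extremal.

Theorem lemma4p1 (R : realType) (a1 a2 a3 : R) (a : R) :
  is_triangle a1 a2 a3 -> 0 <= a -> a <= 1 ->
  (forall e : R, 0 < e -> exists N : nat, forall n : nat, (N <= n)%N ->
     ((h a1 a2 a3 n)%:R : R) <= a * (n%:R) ^+ 3 * (1 + e)) ->
  forall n : nat, (0 < n)%N -> ((h a1 a2 a3 n)%:R : R) <= a * (n%:R) ^+ 3.
Proof.
move=> [a1_gt0 [a2_gt0 [a3_gt0 _]]] _ _ h_asym n n_gt0.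
have mn_gt0 : 0 < Num.min a1 (Num.min a2 a3) by rewrite !lt_min a1_gt0 a2_gt0 a3_gt0.
apply: ler_mul1D_gt0 => e e_gt0; have [N h_le] := h_asym e e_gt0.
have m3_gt0 : 0 < N.+1%:R ^+ 3 :> R by rewrite exprn_gt0 ?ltr0n.
have le_N : (N <= n * N.+1)%N by nia.
rewrite -(ler_pM2r m3_gt0) (_ : a * _ * _ * _ = a * (n * N.+1)%:R ^+ 3 * (1 + e)).
  apply: le_trans (h_le _ le_N).
  by rewrite -natrX -natrM ler_nat h_mul_cube_le.
by rewrite natrM; ring.
Qed.
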